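(* Let $\mathcal B$ be a nonempty collection of $\mu$-measurable subsets of $2^\omega$ such that for every $B\in\mathcal B$, every clopen $D\subseteq2^\omega$ and every finite binary sequence $t$ with $N_t\cap D=\emptyset$, the set $D\cup t^\frown B$ belongs to $\mathcal B$. Then for every measurable $A\subseteq2^\omega$ and every $\varepsilon>0$ there is $B\in\mathcal B$ with $\mu(A\triangle B)<\varepsilon$; i.e. $\{[B]:B\in\mathcal B\}$ is topologically dense in $\mathrm{MALG}$.
   Context: $2^\omega$ is the Cantor space; $N_t=\{x:t\subset x\}$; $t^\frown B=\{t^\frown x: x\in B\}$ (concatenation). $\mu$ is the coin-tossing measure with $\mu(N_t)=2^{-\mathrm{lh}(t)}$. $\mathrm{MALG}$ is the measure algebra (measurable sets modulo null sets) with metric $\delta([A],[B])=\mu(A\triangle B)$. *)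

From Stdlib Require Import Reals Lra Lia List ClassicalEpsilon.
Open Scope R_scope.

Definition cantor := nat -> bool.
Definition fseq := list bool.

Definition cyl (t : fseq) (x : cantor) : Prop :=
  forall i, (i < length t)%nat -> x i = nth i t false.

Definition concat (t : fseq) (x : cantor) : cantor :=
  fun n => if Nat.ltb n (length t) then nth n t false else x (n - length t)%nat.

Definition concat_set (t : fseq) (B : cantor -> Prop) (y : cantor) : Prop :=
  exists x, B x /\ forall n, y n = concat t x n.

Definition is_open (D : cantor -> Prop) : Prop :=
  forall x, D x -> exists n : nat,
    forall y, (forall i, (i < n)%nat -> y i = x i) -> D y.
Definition is_closed (D : cantor -> Prop) : Prop :=
  is_open (fun x => ~ D x).
Definition clopen (D : cantor -> Prop) : Prop := is_open D /\ is_closed D.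

Definition symdiff (A B : cantor -> Prop) (x : cantor) : Prop :=
  (A x /\ ~ B x) \/ (B x /\ ~ A x).

(* mu(N_t) = 2^{-lh(t)} *)
Definition weight (t : fseq) : R := (/ 2) ^ length t.

Definition covers (c : nat -> fseq) (A : cantor -> Prop) : Prop :=
  forall x, A x -> exists k, cyl (c k) x.

Definition cover_sum (A : cantor -> Prop) (r : R) : Prop :=
  exists c, covers c A /\ infinite_sum (fun k => weight (c k)) r.

Definition is_inf (S : R -> Prop) (m : R) : Prop :=
  (forall r, S r -> m <= r) /\ (forall m', (forall r, S r -> m' <= r) -> m' <= m).

Lemma infinite_sum_nonneg (s : nat -> R) (r : R) :
  (forall n, 0 <= s n) -> infinite_sum s r -> 0 <= r.
Proof.
  intros Hs Hr. destruct (Rle_dec 0 r) as [h|h]; [exact h|].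
  exfalso. destruct (Hr (- r)) as [M HM]; [lra|].
  specialize (HM M (le_n M)). pose proof (cond_pos_sum s M Hs).
  unfold Rdist in HM. pose proof (Rle_abs (sum_f_R0 s M - r)). lra.
Qed.

Lemma mu_star_exists (A : cantor -> Prop) : { m : R | is_inf (cover_sum A) m }.
Proof.
  set (E := fun y => cover_sum A (- y)).
  assert (HB : bound E).
  { exists 0. intros y [c [_ Hc]].
    assert (0 <= - y); [|lra].
    apply (infinite_sum_nonneg _ _ (fun k => pow_le (/ 2) _ ltac:(lra)) Hc). }
  assert (HE : exists y, E y).
  { exists (- 2). unfold E, cover_sum.
    exists (fun k => repeat true k). split.
    - intros x _. exists 0%nat. intros i Hi. simpl in Hi. lia.
    - pose proof (GP_infinite (/ 2) ltac:(rewrite Rabs_right; [lra|apply Rle_ge; lra])) as G.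
      unfold Pser in G. replace (- - 2) with (/ (1 - / 2)) by field.
      intros eps He. destruct (G eps He) as [M HM]. exists M. intros n Hn.
      specialize (HM n Hn).
      replace (sum_f_R0 (fun k => weight (repeat true k)) n)
        with (sum_f_R0 (fun k => 1 * (/ 2) ^ k) n); [exact HM|].
      apply sum_eq. intros i _. unfold weight. rewrite repeat_length. ring. }
  destruct (completeness E HB HE) as [m [Hub Hlub]].
  exists (- m). split.
  - intros r Hr. assert (E (- r)) by (unfold E; rewrite Ropp_involutive; exact Hr).
    specialize (Hub _ H). lra.
  - intros m' Hm'. assert (m <= - m'); [|lra].
    apply Hlub. intros y Hy. specialize (Hm' _ Hy). lra.
Qed.

Definition mu_star (A : cantor -> Prop) : R := proj1_sig (mu_star_exists A).

(* mu-measurable sets (Caratheodory); on these mu = mu_star *)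
Definition measurable (A : cantor -> Prop) : Prop :=
  forall E : cantor -> Prop,
    mu_star E = mu_star (fun x => E x /\ A x) + mu_star (fun x => E x /\ ~ A x).

(* A measurable set A is approximated by a
   clopen set D: cover A by cylinders of total weight close to mu(A); by
   Caratheodory measurability the cover exceeds A by little, and since the
   weights are summable, all but finitely many cylinders of the cover have
   small total weight, so the finite union D of the first ones is close to A.
   Next pick a cylinder N_t of small measure and any B0 in the family; the
   closure property applied to the clopen set D \ N_t (disjoint from N_t)
   yields B = (D \ N_t) u t^B0 in the family.  B agrees with D outside N_t,
   so A (+) B is covered by (A (+) D) u N_t, whose outer measure is small. *)
From Pilot Require Import Defs.
From Stdlib Require Import Reals List Lra Lia Classical.
Open Scope R_scope.

(* Series.  [infinite_sum s l] is convertible to [Un_cv (sum_f_R0 s) l]. *)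

Lemma Un_cv_const (c : R) : Un_cv (fun _ => c) c.
Proof.
  intros eps He. exists 0%nat. intros n _. rewrite R_dist_eq. lra.
Qed.

Lemma Un_cv_even_odd (u : nat -> R) (l : R) :
  Un_cv (fun n => u (2 * n)%nat) l -> Un_cv (fun n => u (S (2 * n))) l ->
  Un_cv u l.
Proof.
  intros Heven Hodd eps He.
  destruct (Heven eps He) as [N1 H1], (Hodd eps He) as [N2 H2].
  exists (2 * Nat.max N1 N2)%nat. intros n Hn.
  destruct (Nat.Even_or_Odd n) as [[k ->]|[k ->]].
  - apply H1. lia.
  - rewrite Nat.add_1_r. apply H2. lia.
Qed.

Definition interleave {X : Type} (a b : nat -> X) (k : nat) : X :=
  if Nat.even k then a (Nat.div2 k) else b (Nat.div2 k).

Lemma interleave_even {X : Type} (a b : nat -> X) (n : nat) :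
  interleave a b (2 * n) = a n.
Proof. unfold interleave. rewrite Nat.even_mul, Nat.div2_double. reflexivity. Qed.

Lemma interleave_odd {X : Type} (a b : nat -> X) (n : nat) :
  interleave a b (S (2 * n)) = b n.
Proof.
  unfold interleave.
  rewrite Nat.even_succ, <- Nat.negb_even, Nat.even_mul, Nat.div2_succ_double.
  reflexivity.
Qed.

Lemma sum_interleave_odd (a b : nat -> R) (n : nat) :
  sum_f_R0 (interleave a b) (S (2 * n)) = sum_f_R0 a n + sum_f_R0 b n.
Proof.
  induction n as [|n IH].
  - exact (f_equal2 Rplus (interleave_even a b 0) (interleave_odd a b 0)).
  - replace (S (2 * S n)) with (S (S (S (2 * n)))) by lia.
    change (sum_f_R0 (interleave a b) (S (2 * n)) + interleave a b (S (S (2 * n)))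
            + interleave a b (S (S (S (2 * n))))
            = sum_f_R0 a n + a (S n) + (sum_f_R0 b n + b (S n))).
    replace (S (S (2 * n))) with (2 * S n)%nat by lia.
    rewrite IH, interleave_even, interleave_odd. ring.
Qed.

Lemma infinite_sum_interleave (a b : nat -> R) (la lb : R) :
  infinite_sum a la -> infinite_sum b lb -> infinite_sum (interleave a b) (la + lb).
Proof.
  intros Ha Hb.
  apply (CV_shift _ 1). apply Un_cv_even_odd.
  - eapply Un_cv_ext; [|exact (CV_plus _ _ _ _ Ha Hb)].
    intros n. cbv beta. rewrite Nat.add_1_r. symmetry. apply sum_interleave_odd.
  - assert (Ha1 : Un_cv (fun n => sum_f_R0 a (S n)) la).
    { eapply Un_cv_ext; [|exact (CV_shift' _ 1 _ Ha)].
      intros n. cbv beta. rewrite Nat.add_1_r. reflexivity. }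
    eapply Un_cv_ext; [|exact (CV_plus _ _ _ _ Ha1 Hb)].
    intros n. cbv beta. rewrite Nat.add_1_r.
    change (sum_f_R0 a n + a (S n) + sum_f_R0 b n
            = sum_f_R0 (interleave a b) (S (2 * n)) + interleave a b (S (S (2 * n)))).
    replace (S (S (2 * n))) with (2 * S n)%nat by lia.
    rewrite sum_interleave_odd, interleave_even. ring.
Qed.

Lemma infinite_sum_tail (s : nat -> R) (r : R) (K : nat) :
  infinite_sum s r -> infinite_sum (fun k => s (k + S K)%nat) (r - sum_f_R0 s K).
Proof.
  intros Hs.
  eapply Un_cv_ext;
    [|exact (CV_minus _ _ _ _ (CV_shift' _ (S K) _ Hs) (Un_cv_const (sum_f_R0 s K)))].
  intros n. simpl. rewrite (tech2 s K (n + S K)) by lia.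
  replace (n + S K - S K)%nat with n by lia.
  rewrite (sum_eq (fun i => s (S K + i)%nat) (fun k => s (k + S K)%nat))
    by (intros i _; f_equal; lia).
  ring.
Qed.

Lemma infinite_sum_scal (w : R) (s : nat -> R) (l : R) :
  infinite_sum s l -> infinite_sum (fun k => w * s k) (w * l).
Proof.
  intros Hs.
  eapply Un_cv_ext; [|exact (CV_mult _ _ _ _ (Un_cv_const w) Hs)].
  intros n. cbv beta. rewrite scal_sum. apply sum_eq. intros i _. ring.
Qed.

Lemma mu_star_is_inf (X : cantor -> Prop) : is_inf (cover_sum X) (mu_star X).
Proof. exact (proj2_sig (mu_star_exists X)). Qed.

Lemma mu_star_le_cover (X : cantor -> Prop) (c : nat -> fseq) (r : R) :
  covers c X -> infinite_sum (fun k => weight (c k)) r -> mu_star X <= r.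
Proof.
  intros Hc Hs. apply (proj1 (mu_star_is_inf X)). exists c. auto.
Qed.

Lemma mu_star_ge (X : cantor -> Prop) (m : R) :
  (forall r, cover_sum X r -> m <= r) -> m <= mu_star X.
Proof. apply (proj2 (mu_star_is_inf X)). Qed.

Lemma mu_star_approx (X : cantor -> Prop) (d : R) :
  0 < d -> exists c r, covers c X /\ infinite_sum (fun k => weight (c k)) r /\
                       r < mu_star X + d.
Proof.
  intros Hd. apply NNPP. intros Hno.
  assert (Hbig : mu_star X + d <= mu_star X); [|lra].
  apply mu_star_ge. intros r [c [Hc Hs]].
  apply Rnot_lt_le. intros Hr. apply Hno. exists c, r. auto.
Qed.

Lemma mu_star_mono (X Y : cantor -> Prop) :
  (forall x, X x -> Y x) -> mu_star X <= mu_star Y.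
Proof.
  intros HXY. apply mu_star_ge. intros r [c [Hc Hs]].
  apply (mu_star_le_cover _ c); auto. intros x Hx. apply Hc, HXY, Hx.
Qed.

Lemma mu_star_ext (X Y : cantor -> Prop) :
  (forall x, X x <-> Y x) -> mu_star X = mu_star Y.
Proof.
  intros E. apply Rle_antisym; apply mu_star_mono; intros x; apply E.
Qed.

(* Subadditivity: interleave nearly optimal covers of X and of Y. *)
Lemma mu_star_union (X Y : cantor -> Prop) :
  mu_star (fun x => X x \/ Y x) <= mu_star X + mu_star Y.
Proof.
  apply Rle_plus_epsilon. intros d Hd.
  destruct (mu_star_approx X (d / 2)) as [c1 [r1 [C1 [S1 L1]]]]; [lra|].
  destruct (mu_star_approx Y (d / 2)) as [c2 [r2 [C2 [S2 L2]]]]; [lra|].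
  assert (Hcov : mu_star (fun x => X x \/ Y x) <= r1 + r2); [|lra].
  apply (mu_star_le_cover _ (interleave c1 c2)).
  - intros x [Hx|Hx].
    + destruct (C1 x Hx) as [k Hk]. exists (2 * k)%nat. rewrite interleave_even. exact Hk.
    + destruct (C2 x Hx) as [k Hk]. exists (S (2 * k)). rewrite interleave_odd. exact Hk.
  - eapply Un_cv_ext; [|exact (infinite_sum_interleave _ _ _ _ S1 S2)].
    intros n. apply sum_eq. intros k _. unfold interleave. now destruct (Nat.even k).
Qed.

(* N_t is covered by the cylinders t^1^k, of total weight 2 * 2^-lh(t). *)
Lemma mu_star_cyl (t : fseq) : mu_star (cyl t) <= 2 * weight t.
Proof.
  apply (mu_star_le_cover _ (fun k => t ++ repeat true k)).
  - intros x Hx. exists 0%nat. simpl. rewrite app_nil_r. exact Hx.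
  - pose proof (GP_infinite (/ 2) ltac:(rewrite Rabs_right; lra)) as Hgeom.
    replace (2 * weight t) with (weight t * / (1 - / 2)) by field.
    eapply Un_cv_ext; [|exact (infinite_sum_scal (weight t) _ _ Hgeom)].
    intros n. apply sum_eq. intros k _.
    unfold weight. rewrite length_app, repeat_length, pow_add. ring.
Qed.

Lemma small_cylinder (d : R) : 0 < d -> exists t, mu_star (cyl t) < d.
Proof.
  intros Hd.
  destruct (pow_lt_1_zero (/ 2) ltac:(rewrite Rabs_right; lra) (d / 2)) as [m Hm]; [lra|].
  specialize (Hm m (le_n m)). rewrite Rabs_right in Hm by (apply Rle_ge, pow_le; lra).
  exists (repeat true m). pose proof (mu_star_cyl (repeat true m)) as Hcyl.
  unfold weight in Hcyl. rewrite repeat_length in Hcyl. lra.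
Qed.

Lemma mu_star_excess (A U : cantor -> Prop) :
  measurable A -> (forall x, A x -> U x) ->
  mu_star (fun x => U x /\ ~ A x) = mu_star U - mu_star A.
Proof.
  intros HA HAU.
  rewrite (HA U), (mu_star_ext (fun x => U x /\ A x) A) by (intros x; split; intuition).
  ring.
Qed.

Lemma cover_tail_small (c : nat -> fseq) (r d : R) :
  infinite_sum (fun k => weight (c k)) r -> 0 < d ->
  exists K, mu_star (fun x => exists k, cyl (c (k + S K)%nat) x) < d.
Proof.
  intros Hs Hd. destruct (Hs d Hd) as [K HK]. exists K.
  specialize (HK K (le_n K)). unfold Rdist in HK.
  pose proof (Rabs_Ropp (sum_f_R0 (fun k => weight (c k)) K - r)) as Hopp.
  pose proof (Rle_abs (- (sum_f_R0 (fun k => weight (c k)) K - r))) as Habs.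
  pose proof (mu_star_le_cover (fun x => exists k, cyl (c (k + S K)%nat) x)
                (fun k => c (k + S K)%nat) _ (fun x Hx => Hx)
                (infinite_sum_tail _ _ K Hs)) as Htail.
  lra.
Qed.

Lemma open_ext (P Q : cantor -> Prop) :
  (forall x, P x <-> Q x) -> is_open P -> is_open Q.
Proof.
  intros E HP x Hx. apply E in Hx. destruct (HP x Hx) as [n Hn].
  exists n. intros y Hy. apply E, Hn, Hy.
Qed.

Lemma clopen_ext (P Q : cantor -> Prop) :
  (forall x, P x <-> Q x) -> clopen P -> clopen Q.
Proof.
  intros E [Hopen Hclosed]. split.
  - exact (open_ext P Q E Hopen).
  - apply (open_ext (fun x => ~ P x)); [|exact Hclosed].
    intros x. specialize (E x). tauto.
Qed.

Lemma open_or (P Q : cantor -> Prop) :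
  is_open P -> is_open Q -> is_open (fun x => P x \/ Q x).
Proof.
  intros HP HQ x [Hx|Hx].
  - destruct (HP x Hx) as [n Hn]. exists n. intros y Hy. left. auto.
  - destruct (HQ x Hx) as [n Hn]. exists n. intros y Hy. right. auto.
Qed.

Lemma open_and (P Q : cantor -> Prop) :
  is_open P -> is_open Q -> is_open (fun x => P x /\ Q x).
Proof.
  intros HP HQ x [HPx HQx].
  destruct (HP x HPx) as [n Hn], (HQ x HQx) as [m Hm].
  exists (Nat.max n m). intros y Hy.
  split; [apply Hn|apply Hm]; intros i Hi; apply Hy; lia.
Qed.

Lemma clopen_not (P : cantor -> Prop) : clopen P -> clopen (fun x => ~ P x).
Proof.
  intros [Hopen Hclosed]. split; [exact Hclosed|].
  apply (open_ext P); [|exact Hopen]. intros x. split; [tauto|apply NNPP].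
Qed.

Lemma clopen_or (P Q : cantor -> Prop) :
  clopen P -> clopen Q -> clopen (fun x => P x \/ Q x).
Proof.
  intros [HP1 HP2] [HQ1 HQ2]. split; [exact (open_or _ _ HP1 HQ1)|].
  apply (open_ext (fun x => ~ P x /\ ~ Q x)); [intros x; tauto|].
  exact (open_and _ _ HP2 HQ2).
Qed.

Lemma clopen_and (P Q : cantor -> Prop) :
  clopen P -> clopen Q -> clopen (fun x => P x /\ Q x).
Proof.
  intros HP HQ.
  apply (clopen_ext (fun x => ~ (~ P x \/ ~ Q x))).
  - intros x. split; [intros H; split; apply NNPP; tauto|tauto].
  - exact (clopen_not _ (clopen_or _ _ (clopen_not _ HP) (clopen_not _ HQ))).
Qed.

(* N_t depends only on the first lh(t) coordinates. *)
Lemma clopen_cyl (t : fseq) : clopen (cyl t).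
Proof.
  split; intros x Hx; exists (length t); intros y Hy.
  - intros i Hi. rewrite Hy by exact Hi. apply Hx, Hi.
  - intros Hyt. apply Hx. intros i Hi. rewrite <- Hy by exact Hi. apply Hyt, Hi.
Qed.

Lemma clopen_finite_union (c : nat -> fseq) (K : nat) :
  clopen (fun x => exists k, (k <= K)%nat /\ cyl (c k) x).
Proof.
  induction K as [|K IH].
  - apply (clopen_ext (cyl (c 0%nat))); [|apply clopen_cyl]. intros x. split.
    + intros H. exists 0%nat. auto.
    + intros [k [Hk H]]. replace k with 0%nat in H by lia. exact H.
  - refine (clopen_ext _ _ _ (clopen_or _ _ IH (clopen_cyl (c (S K))))).
    intros x. split.
    + intros [[k [Hk H]]|H]; [exists k|exists (S K)]; split; auto.
    + intros [k [Hk H]]. destruct (Nat.eq_dec k (S K)) as [->|Hne]; [right; exact H|].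
      left. exists k. split; [lia|exact H].
Qed.

Lemma clopen_approximation (A : cantor -> Prop) (d : R) :
  measurable A -> 0 < d -> exists D, clopen D /\ mu_star (symdiff A D) < d.
Proof.
  intros HA Hd.
  destruct (mu_star_approx A (d / 2)) as [c [r [Hc [Hs Hr]]]]; [lra|].
  destruct (cover_tail_small c r (d / 2) Hs) as [K HK]; [lra|].
  set (U := fun x => exists k, cyl (c k) x).
  exists (fun x => exists k, (k <= K)%nat /\ cyl (c k) x).
  split; [apply clopen_finite_union|].
  assert (Hexcess : mu_star (fun x => U x /\ ~ A x) < d / 2).
  { rewrite mu_star_excess by (exact HA || exact Hc).
    pose proof (mu_star_le_cover U c r (fun x Hx => Hx) Hs). lra. }
  assert (Hsplit : forall x, symdiff A (fun x => exists k, (k <= K)%nat /\ cyl (c k) x) x ->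
            (U x /\ ~ A x) \/ (exists k, cyl (c (k + S K)%nat) x)).
  { intros x [[HAx Hout]|[[k [_ Hk]] HnA]].
    - right. destruct (Hc x HAx) as [k Hk].
      destruct (Compare_dec.le_lt_dec k K) as [Hle|Hlt]; [exfalso; eauto|].
      exists (k - S K)%nat. replace (k - S K + S K)%nat with k by lia. exact Hk.
    - left. split; [exists k|]; assumption. }
  pose proof (mu_star_mono _ _ Hsplit) as Hmono.
  pose proof (mu_star_union (fun x => U x /\ ~ A x)
                (fun x => exists k, cyl (c (k + S K)%nat) x)) as Hunion.
  lra.
Qed.

Lemma concat_set_cyl (t : fseq) (B : cantor -> Prop) (x : cantor) :
  concat_set t B x -> cyl t x.
Proof.
  intros [y [_ Hy]] i Hi. rewrite Hy. unfold Defs.concat.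
  apply Nat.ltb_lt in Hi. rewrite Hi. reflexivity.
Qed.

(* Grafting t^B onto D \ N_t changes D only inside N_t. *)
Lemma graft_symdiff (A B B' D : cantor -> Prop) (t : fseq) :
  (forall x, B' x <-> ((D x /\ ~ cyl t x) \/ concat_set t B x)) ->
  forall x, symdiff A B' x -> symdiff A D x \/ cyl t x.
Proof.
  intros EB' x Hx. destruct (classic (cyl t x)) as [Ht|Ht]; [right; exact Ht|left].
  assert (Hagree : B' x <-> D x).
  { rewrite EB'. split; [|tauto].
    intros [[HD _]|Hc]; [exact HD|exfalso; exact (Ht (concat_set_cyl _ _ _ Hc))]. }
  unfold symdiff in *. rewrite <- Hagree. exact Hx.
Qed.

Theorem lemma2p1
  (calB : (cantor -> Prop) -> Prop)
  (Hmeas : forall B, calB B -> measurable B)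
  (Hne : exists B, calB B)
  (Hclos : forall (B D : cantor -> Prop) (t : fseq),
      calB B -> clopen D -> (forall x, ~ (cyl t x /\ D x)) ->
      exists B', calB B' /\ forall x, B' x <-> (D x \/ concat_set t B x)) :
  forall A : cantor -> Prop, measurable A ->
  forall eps : R, 0 < eps ->
  exists B, calB B /\ mu_star (symdiff A B) < eps.
Proof.
  intros A HA eps Heps.
  destruct (clopen_approximation A (eps / 2) HA) as [D [HD HAD]]; [lra|].
  destruct (small_cylinder (eps / 2)) as [t Ht]; [lra|].
  destruct Hne as [B0 HB0].
  destruct (Hclos B0 (fun x => D x /\ ~ cyl t x) t HB0) as [B [HB EB]].
  - exact (clopen_and _ _ HD (clopen_not _ (clopen_cyl t))).
  - intros x [Hcyl [_ Hncyl]]. exact (Hncyl Hcyl).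
  - exists B. split; [exact HB|].
    pose proof (mu_star_mono _ _ (graft_symdiff A B0 B D t EB)) as Hmono.
    pose proof (mu_star_union (symdiff A D) (cyl t)) as Hunion.
    lra.
Qed.
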